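(* Let $H\le G$ be finite groups and $\Sigma$ a group of automorphisms of $G$. If the set $\{(\sigma,g)\in\Sigma\times H:\sigma(g)=g\}$ is $4$-large in the direct product group $\Sigma\times H$, then $\sigma(g)=g$ for all $\sigma\in\Sigma$ and $g\in H$.
   Context: A subset $X$ of a group $K$ is $4$-large in $K$ if the intersection of any $4$ left translates $a_1X\cap a_2X\cap a_3X\cap a_4X$ ($a_i\in K$) is non-empty. *)

From mathcomp Require Import all_boot all_fingroup.
Set Implicit Arguments. Unset Strict Implicit. Unset Printing Implicit Defensive.
Local Open Scope group_scope.

Definition four_large (T : finGroupType) (K : {group T}) (X : {set T}) : Prop :=
  forall a1 a2 a3 a4 : T, a1 \in K -> a2 \in K -> a3 \in K -> a4 \in K ->
    (a1 *: X) :&: (a2 *: X) :&: (a3 *: X) :&: (a4 *: X) != set0.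

From mathcomp Require Import all_boot all_fingroup.
Set Implicit Arguments. Unset Strict Implicit. Unset Printing Implicit Defensive.
Local Open Scope group_scope.

(* Translating the set of fixed pairs by (1,1), (s,1), (1,g) and (s,g), a
   common point (t,h) makes both t and s^-1 t fix h and g^-1 h, so s fixes
   them too.  The fixed points of an automorphism of G form a subgroup, hence
   s also fixes g = h (g^-1 h)^-1. *)

Lemma four_largeP (T : finGroupType) (K : {group T}) (X : {set T})
    (a1 a2 a3 a4 : T) :
  four_large K X -> a1 \in K -> a2 \in K -> a3 \in K -> a4 \in K ->
  exists x, [/\ a1^-1 * x \in X, a2^-1 * x \in X,
                a3^-1 * x \in X & a4^-1 * x \in X].
Proof.
move=> LX Ka1 Ka2 Ka3 Ka4.
have /set0Pn[x] := LX _ _ _ _ Ka1 Ka2 Ka3 Ka4.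
by rewrite !inE !mem_lcoset -!andbA => /and4P[]; exists x.
Qed.

Lemma perm_fix_of_fix_mulV (T : finType) (s t : {perm T}) (x : T) :
  t x = x -> (s^-1 * t) x = x -> s x = x.
Proof.
rewrite permM => tx tsx.
have sVx : s^-1 x = x by apply: (@perm_inj _ t); rewrite tsx tx.
by rewrite -{1}sVx permKV.
Qed.

Lemma Aut_fix_mulV (gT : finGroupType) (G : {group gT}) (a : {perm gT})
    (x y : gT) :
  a \in Aut G -> x \in G -> y \in G -> a x = x -> a y = y ->
  a (x * y^-1) = x * y^-1.
Proof.
move=> AutGa Gx Gy ax ay.
by rewrite -(autmE AutGa) morphM ?groupV // morphV //= autmE ax ay.
Qed.

Lemma fixed_pairs_translates_meet (gT : finGroupType) (H : {group gT})
    (Sigma : {group {perm gT}}) (s : {perm gT}) (g : gT) :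
  four_large [group of setX Sigma H]
    [set sg in setX Sigma H | sg.1 sg.2 == sg.2] ->
  s \in Sigma -> g \in H ->
  exists (t : {perm gT}) h, [/\ h \in H, t h = h, (s^-1 * t) h = h,
                  t (g^-1 * h) = g^-1 * h & (s^-1 * t) (g^-1 * h) = g^-1 * h].
Proof.
move=> L Ss Hg.
have inSH u v : u \in Sigma -> v \in H -> (u, v) \in setX Sigma H.
  by move=> Su Hv; rewrite in_setX Su Hv.
have [[t h] []] := four_largeP (a1 := (1, 1)) (a2 := (s, 1)) (a3 := (1, g))
  (a4 := (s, g)) L (inSH _ _ (group1 _) (group1 _)) (inSH _ _ Ss (group1 _))
  (inSH _ _ (group1 _) Hg) (inSH _ _ Ss Hg).
rewrite !inE /= !invg1 !mul1g.
move=> /andP[/andP[_ Hh] /eqP th] /andP[_ /eqP sth].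
move=> /andP[_ /eqP tgh] /andP[_ /eqP stgh].
by exists t, h.
Qed.

Theorem theorem7p2 (gT : finGroupType) (G H : {group gT})
    (Sigma : {group {perm gT}}) :
  H \subset G -> Sigma \subset Aut G ->
  four_large [group of setX Sigma H]
    [set sg in setX Sigma H | sg.1 sg.2 == sg.2] ->
  forall (s : {perm gT}) (g : gT), s \in Sigma -> g \in H -> s g = g.
Proof.
move=> sHG sSA L s g Ss Hg.
have [t [h [Hh th sth tgh stgh]]] := fixed_pairs_translates_meet L Ss Hg.
have Gh : h \in G by apply: (subsetP sHG).
have Ggh : g^-1 * h \in G by rewrite groupM ?groupV //; apply: (subsetP sHG).
have sh := perm_fix_of_fix_mulV th sth.
have sgh := perm_fix_of_fix_mulV tgh stgh.
have := Aut_fix_mulV (subsetP sSA _ Ss) Gh Ggh sh sgh.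
by rewrite invMg invgK mulKVg.
Qed.
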